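(* Let $VB_n$ be the virtual braid group on $n$ strands. Then: (a) $VB_2$ is isomorphic to $\mathbb{Z}*\mathbb{Z}_2$, and this group is residually nilpotent; (b) for $n\geq 2$, $\Gamma_1(VB_n)/\Gamma_2(VB_n)\cong\mathbb{Z}\oplus\mathbb{Z}_2$; (c) $\Gamma_2(VB_3)/\Gamma_3(VB_3)\cong\mathbb{Z}_2$, and for $n\geq 4$, $\Gamma_2(VB_n)=\Gamma_3(VB_n)$; (d) for $n\geq 3$, $VB_n$ is not residually nilpotent.
   Context: The virtual braid group $VB_n$ is the group with generators $\sigma_i,\rho_i$ ($i=1,\dots,n-1$) and defining relations: $\sigma_i\sigma_{i+1}\sigma_i=\sigma_{i+1}\sigma_i\sigma_{i+1}$ ($1\le i\le n-2$); $\sigma_i\sigma_j=\sigma_j\sigma_i$ ($|i-j|\geq 2$); $\rho_i\rho_{i+1}\rho_i=\rho_{i+1}\rho_i\rho_{i+1}$ ($1\le i\le n-2$); $\rho_i\rho_j=\rho_j\rho_i$ ($|i-j|\geq 2$); $\rho_i^2=1$; $\sigma_i\rho_j=\rho_j\sigma_i$ ($|i-j|\geq2$); $\rho_i\rho_{i+1}\sigma_i=\sigma_{i+1}\rho_i\rho_{i+1}$ ($1\le i\le n-2$). For a group $G$, $\Gamma_1(G)=G$, $\Gamma_i(G)=[\Gamma_{i-1}(G),G]$. A group $G$ is residually nilpotent if $\bigcap_{i\ge1}\Gamma_i(G)=\{1\}$. $\mathbb{Z}_2=\mathbb{Z}/2\mathbb{Z}$. *)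

From Stdlib Require Import List ZArith Bool Lia.
Import ListNotations.

Set Implicit Arguments.

Record SGroup := {
  gcar :> Type;
  geq : gcar -> gcar -> Prop;
  gmul : gcar -> gcar -> gcar;
  ginv : gcar -> gcar;
  gone : gcar;
  geq_refl : forall x, geq x x;
  geq_sym : forall x y, geq x y -> geq y x;
  geq_trans : forall x y z, geq x y -> geq y z -> geq x z;
  gmul_compat : forall x x' y y', geq x x' -> geq y y' ->
                  geq (gmul x y) (gmul x' y');
  ginv_compat : forall x x', geq x x' -> geq (ginv x) (ginv x');
  gmul_assoc : forall x y z, geq (gmul x (gmul y z)) (gmul (gmul x y) z);
  gmul_1l : forall x, geq (gmul gone x) x;
  gmul_Vl : forall x, geq (gmul (ginv x) x) gone }.

Arguments geq {s} _ _.
Arguments gmul {s} _ _.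
Arguments ginv {s} _.
Arguments gone {s}.

Definition hom {G H : SGroup} (f : G -> H) : Prop :=
  (forall x y, geq x y -> geq (f x) (f y)) /\
  (forall x y, geq (f (gmul x y)) (gmul (f x) (f y))).

Definition isomorphic (G H : SGroup) : Prop :=
  exists (f : G -> H) (g : H -> G), hom f /\ hom g /\
    (forall x, geq (g (f x)) x) /\ (forall y, geq (f (g y)) y).

Inductive gen {G : SGroup} (S : G -> Prop) : G -> Prop :=
  | gen_in x : S x -> gen S x
  | gen_one : gen S gone
  | gen_mul x y : gen S x -> gen S y -> gen S (gmul x y)
  | gen_inv x : gen S x -> gen S (ginv x)
  | gen_eq x y : geq x y -> gen S x -> gen S y.

Definition comm {G : SGroup} (x y : G) : G :=
  gmul (gmul (ginv x) (ginv y)) (gmul x y).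

(** Lower central series: Gamma 1 = G, Gamma (i+1) = [Gamma i, G].
    (Gamma 0 is also set to G; it is never used.) *)
Fixpoint Gamma (G : SGroup) (i : nat) : G -> Prop :=
  match i with
  | S (S _ as j) =>
      gen (fun z => exists x y, Gamma G j x /\ z = comm x y)
  | _ => fun _ => True
  end.

Definition resid_nilp (G : SGroup) : Prop :=
  forall x : G, (forall i, 1 <= i -> Gamma G i x) -> geq x gone.

(** [quot_iso G A B H]: the quotient A/B (B a normal subgroup of the
    subgroup A of G) is isomorphic to H, witnessed by a map f : A -> H that
    is well defined on cosets xB, multiplicative, injective on cosets and
    surjective (i.e. f induces a bijective homomorphism A/B -> H). *)
Definition quot_iso {G : SGroup} (A B : G -> Prop) (H : SGroup) : Prop :=
  exists f : G -> H,
    (forall x y, A x -> A y -> B (gmul (ginv x) y) -> geq (f x) (f y)) /\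
    (forall x y, A x -> A y -> geq (f (gmul x y)) (gmul (f x) (f y))) /\
    (forall x y, A x -> A y -> geq (f x) (f y) -> B (gmul (ginv x) y)) /\
    (forall h : H, exists x, A x /\ geq (f x) h).

Section Presented.
Variable X : Type.
Definition word := list (X * bool).  (* (x, false) = x, (x, true) = x^-1 *)
Variable R : word -> word -> Prop.

Definition winv (w : word) : word :=
  rev (map (fun p => (fst p, negb (snd p))) w).

Inductive weq : word -> word -> Prop :=
  | weq_refl u : weq u u
  | weq_sym u v : weq u v -> weq v u
  | weq_trans u v w : weq u v -> weq v w -> weq u w
  | weq_cat u u' v v' : weq u u' -> weq v v' -> weq (u ++ v) (u' ++ v')
  | weq_free a b : weq [(a, b); (a, negb b)] []
  | weq_rel u v : R u v -> weq u v.

Lemma weq_free' a b : weq [(a, negb b); (a, b)] [].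
Proof. generalize (weq_free a (negb b)). rewrite negb_involutive. auto. Qed.

Lemma winv_l w : weq (winv w ++ w) [].
Proof.
  induction w as [|[a b] w IH]; [apply weq_refl|].
  unfold winv; simpl; fold (winv w).
  rewrite <- app_assoc. simpl.
  apply weq_trans with (winv w ++ ([] ++ w)); [|exact IH].
  apply weq_cat; [apply weq_refl|].
  change ((a, negb b) :: (a, b) :: w) with ([(a, negb b); (a, b)] ++ w).
  apply weq_cat; [apply weq_free'|apply weq_refl].
Qed.

Lemma winv_winv w : winv (winv w) = w.
Proof.
  unfold winv. rewrite map_rev, rev_involutive, map_map.
  induction w as [|[a b] w IH]; simpl; [reflexivity|].
  rewrite negb_involutive; f_equal; exact IH.
Qed.

Lemma winv_r w : weq (w ++ winv w) [].
Proof. rewrite <- (winv_winv w) at 1. apply winv_l. Qed.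

Lemma winv_compat u v : weq u v -> weq (winv u) (winv v).
Proof.
  intro H.
  apply weq_trans with (winv u ++ (v ++ winv v)).
  { rewrite <- (app_nil_r (winv u)) at 1. apply weq_cat; [apply weq_refl|].
    apply weq_sym, winv_r. }
  apply weq_trans with ((winv u ++ u) ++ winv v).
  { rewrite <- app_assoc. apply weq_cat; [apply weq_refl|].
    apply weq_cat; [apply weq_sym, H|apply weq_refl]. }
  change (winv v) with ([] ++ winv v) at 2.
  apply weq_cat; [apply winv_l|apply weq_refl].
Qed.

Definition Presented : SGroup :=
  {| gcar := word; geq := weq; gmul := @app _; ginv := winv; gone := [];
     geq_refl := weq_refl; geq_sym := weq_sym; geq_trans := weq_trans;
     gmul_compat := fun x x' y y' h1 h2 => weq_cat h1 h2;
     ginv_compat := winv_compat;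
     gmul_assoc := fun x y z => ltac:(rewrite app_assoc; apply weq_refl);
     gmul_1l := fun x => weq_refl x;
     gmul_Vl := winv_l |}.
End Presented.

Definition idx (n : nat) := {i : nat | 1 <= i < n}.
(* Generators: (true, i) = sigma_i, (false, i) = rho_i. *)
Definition VBgen (n : nat) := (bool * idx n)%type.

Definition sg {n} (a : idx n) : VBgen n * bool := ((true, a), false).
Definition rh {n} (a : idx n) : VBgen n * bool := ((false, a), false).

Definition far {n} (a b : idx n) : Prop :=
  proj1_sig a + 2 <= proj1_sig b \/ proj1_sig b + 2 <= proj1_sig a.
Definition next {n} (a b : idx n) : Prop := proj1_sig b = S (proj1_sig a).

Definition VBrel (n : nat) (u v : word (VBgen n)) : Prop :=
  (exists a b, next a b /\ u = [sg a; sg b; sg a] /\ v = [sg b; sg a; sg b]) \/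
  (exists a b, far a b /\ u = [sg a; sg b] /\ v = [sg b; sg a]) \/
  (exists a b, next a b /\ u = [rh a; rh b; rh a] /\ v = [rh b; rh a; rh b]) \/
  (exists a b, far a b /\ u = [rh a; rh b] /\ v = [rh b; rh a]) \/
  (exists a, u = [rh a; rh a] /\ v = []) \/
  (exists a b, far a b /\ u = [sg a; rh b] /\ v = [rh b; sg a]) \/
  (exists a b, next a b /\ u = [rh a; rh b; sg a] /\ v = [sg b; rh a; rh b]).

Definition VB (n : nat) : SGroup := Presented (@VBrel n).

(** * Z * Z_2 (free product), presented as < a, b | b^2 = 1 >:
    generator true = a (generating Z), false = b (generating Z_2). *)
Definition ZZ2rel (u v : word bool) : Prop :=
  u = [(false, false); (false, false)] /\ v = [].
Definition Z_free_Z2 : SGroup := Presented ZZ2rel.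

Definition Z2 : SGroup.
Proof.
  refine {| gcar := bool; geq := @eq bool; gmul := xorb; ginv := fun b => b;
            gone := false |}; intros; subst; try reflexivity;
    repeat match goal with b : bool |- _ => destruct b end; reflexivity.
Defined.

Definition Z_plus_Z2 : SGroup.
Proof.
  refine {| gcar := (Z * bool)%type; geq := @eq (Z * bool);
            gmul := fun p q => (fst p + fst q, xorb (snd p) (snd q))%Z;
            ginv := fun p => (- fst p, snd p)%Z; gone := (0%Z, false) |};
    intros; subst; try reflexivity.
  - destruct x as [x1 x2], y as [y1 y2], z as [z1 z2]; simpl.
    f_equal; [lia| now destruct x2, y2, z2].
  - destruct x; reflexivity.
  - destruct x as [x1 x2]; simpl; f_equal; [lia| now destruct x2].
Defined.

(* (a) VB_2 has no braid or far commutation relations, so it is < a, b | b^2 >.  Sending a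
   to 1 + x and b to 1 + y in F_2<<x, y>>/(y^2) maps Gamma_k into 1 + (terms of degree >= k),
   while a reduced word a^n1 b a^n2 b ... keeps a nonzero coefficient at some monomial
   x^d1 y x^d2 y ...; so only 1 lies in every Gamma_k.
   (b) Modulo Gamma_2 the mixed relation identifies all sigma_i and the braid relation all
   rho_i, so VB_n^ab is generated by sigma_1, detected by the exponent sum, and rho_1, of
   order 2.
   (c) Modulo Gamma_3 the commutator is bilinear and only depends on classes modulo Gamma_2,
   so Gamma_2/Gamma_3 is generated by c = [sigma_1, rho_1], with c^2 = [sigma_1, rho_1^2] = 1.
   For n >= 4, c = [sigma_1, rho_3] = 1 modulo Gamma_3; for n = 3, c survives in a class 2
   quotient of Heisenberg type.
   (d) x = sigma_1^-1 sigma_2 satisfies x = [sigma_1^-1 x sigma_1, sigma_1]^-1, hence lies in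
   every Gamma_k, yet it permutes the strands nontrivially. *)

From Stdlib Require Import List ZArith Bool Lia Setoid Morphisms Btauto FunctionalExtensionality.
Import ListNotations.

(** * Lower central series of presented groups *)

Section PresentedGroup.
Context {X : Type} (R : word X -> word X -> Prop).
Local Notation "u ≈ v" := (weq R u v) (at level 70).

Global Instance weq_equiv : Equivalence (weq R).
Proof. split; red; [apply weq_refl | apply weq_sym | apply weq_trans]. Qed.

Global Instance app_weq_proper : Proper (weq R ==> weq R ==> weq R) (@app (X * bool)).
Proof. intros u u' Hu v v' Hv. now apply weq_cat. Qed.

Global Instance cons_weq_proper : Proper (eq ==> weq R ==> weq R) (@cons (X * bool)).
Proof. intros l ? <- u v H. exact (weq_cat (weq_refl R [l]) H). Qed.

Global Instance winv_weq_proper : Proper (weq R ==> weq R) (@winv X).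
Proof. intros u v H. now apply winv_compat. Qed.

Lemma winv_app (u v : word X) : winv (u ++ v) = winv v ++ winv u.
Proof. unfold winv. now rewrite map_app, rev_app_distr. Qed.

Lemma weq_free_at (u v : word X) a e : u ++ (a, e) :: (a, negb e) :: v ≈ u ++ v.
Proof. apply weq_cat; [reflexivity|]. exact (weq_cat (weq_free R a e) (weq_refl R v)). Qed.

Lemma weq_rel_at (u v r s : word X) : R r s -> u ++ r ++ v ≈ u ++ s ++ v.
Proof. intros H. now rewrite (weq_rel R r s H). Qed.

Lemma cancel_winv_r (x v : word X) : x ++ winv x ++ v ≈ v.
Proof. now rewrite app_assoc, (winv_r R x). Qed.

Lemma cancel_winv_l (x v : word X) : winv x ++ x ++ v ≈ v.
Proof. now rewrite app_assoc, (winv_l R x). Qed.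

Definition wcomm (x y : word X) : word X := winv x ++ winv y ++ x ++ y.

Lemma comm_wcomm (x y : word X) : @comm (Presented R) x y = wcomm x y.
Proof. unfold comm, wcomm; simpl. now rewrite <- !app_assoc. Qed.

Lemma gen_ind (S P : word X -> Prop) :
  (forall x, S x -> P x) -> P [] -> (forall x y, P x -> P y -> P (x ++ y)) ->
  (forall x, P x -> P (winv x)) -> (forall x y, x ≈ y -> P x -> P y) ->
  forall x, gen (G := Presented R) S x -> P x.
Proof. intros Hin Hone Hmul Hinv Heq x H. induction H; eauto. Qed.

Definition lcs (k : nat) (u : word X) : Prop := Gamma (Presented R) k u.

Lemma lcs_le1 k u : k <= 1 -> lcs k u.
Proof. intros. destruct k as [|[|k]]; [exact I | exact I | lia]. Qed.

Lemma lcs_weq k u v : u ≈ v -> lcs k u -> lcs k v.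
Proof.
  intros E H. destruct k as [|[|k]]; try exact I.
  now apply (gen_eq (G := Presented R)) with u.
Qed.

Global Instance lcs_proper k : Proper (weq R ==> iff) (lcs k).
Proof. intros u v E; split; apply lcs_weq; [exact E | now symmetry]. Qed.

Lemma lcs_nil k : lcs k [].
Proof. destruct k as [|[|k]]; try exact I. apply (gen_one (G := Presented R)). Qed.

Lemma lcs_app k u v : lcs k u -> lcs k v -> lcs k (u ++ v).
Proof. destruct k as [|[|k]]; try (intros; exact I). apply (gen_mul (G := Presented R)). Qed.

Lemma lcs_winv k u : lcs k u -> lcs k (winv u).
Proof. destruct k as [|[|k]]; try (intros; exact I). apply (gen_inv (G := Presented R)). Qed.

Lemma lcs_wcomm_l k x y : lcs k x -> lcs (S k) (wcomm x y).
Proof.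
  intros H. destruct k as [|k]; [exact I|].
  rewrite <- comm_wcomm. apply (gen_in (G := Presented R)). now exists x, y.
Qed.

Lemma wcomm_conj (g x y : word X) :
  winv g ++ wcomm x y ++ g ≈ wcomm (winv g ++ x ++ g) (winv g ++ y ++ g).
Proof.
  unfold wcomm. rewrite !winv_app, !winv_winv, <- !app_assoc.
  now rewrite !(cancel_winv_r g).
Qed.

Lemma lcs_conj k : forall u g, lcs k u -> lcs k (winv g ++ u ++ g).
Proof.
  induction k as [|k IH]; intros u g H; [exact I|].
  destruct k as [|k]; [exact I|].
  revert u H. apply (@gen_ind _ (fun u => lcs (S (S k)) (winv g ++ u ++ g))).
  - intros x [a [b [Ha ->]]]. rewrite comm_wcomm, wcomm_conj.
    apply lcs_wcomm_l. now apply IH.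
  - simpl. rewrite (winv_l R g). apply lcs_nil.
  - intros x y Hx Hy.
    assert (E : (winv g ++ x ++ g) ++ (winv g ++ y ++ g) ≈ winv g ++ (x ++ y) ++ g)
      by (rewrite <- !app_assoc; now rewrite (cancel_winv_r g)).
    rewrite <- E. now apply lcs_app.
  - intros x Hx. replace (winv g ++ winv x ++ g) with (winv (winv g ++ x ++ g))
      by (rewrite !winv_app, winv_winv; now rewrite app_assoc).
    now apply lcs_winv.
  - intros x y E. now rewrite E.
Qed.

Lemma lcs_S k u : lcs (S k) u -> lcs k u.
Proof.
  destruct k as [|k]; [intros; exact I|].
  apply gen_ind.
  - intros x [a [b [Ha ->]]]. rewrite comm_wcomm. unfold wcomm.
    apply lcs_app; [now apply lcs_winv | now apply lcs_conj].
  - apply lcs_nil.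
  - apply lcs_app.
  - apply lcs_winv.
  - intros x y E. now rewrite E.
Qed.

Definition eqmod (k : nat) (u v : word X) : Prop := lcs k (winv u ++ v).

Global Instance eqmod_equiv k : Equivalence (eqmod k).
Proof.
  unfold eqmod. split.
  - intros u. rewrite (winv_l R u). apply lcs_nil.
  - intros u v H. apply lcs_winv in H. now rewrite winv_app, winv_winv in H.
  - intros u v w H1 H2. pose proof (lcs_app _ _ _ H1 H2) as H.
    now rewrite <- app_assoc, (cancel_winv_r v) in H.
Qed.

Global Instance weq_eqmod k : subrelation (weq R) (eqmod k).
Proof. intros u v E. unfold eqmod. rewrite E, (winv_l R v). apply lcs_nil. Qed.

Lemma eqmod_app_l k w u v : eqmod k u v -> eqmod k (w ++ u) (w ++ v).
Proof. unfold eqmod. rewrite winv_app, <- app_assoc. now rewrite (cancel_winv_l w). Qed.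

Lemma eqmod_cancel_l k w u v : eqmod k (w ++ u) (w ++ v) -> eqmod k u v.
Proof. unfold eqmod. rewrite winv_app, <- app_assoc. now rewrite (cancel_winv_l w). Qed.

Lemma eqmod_app_r k w u v : eqmod k u v -> eqmod k (u ++ w) (v ++ w).
Proof.
  unfold eqmod. intros H. rewrite winv_app, <- app_assoc.
  pose proof (lcs_conj k _ w H) as H'. now rewrite <- app_assoc in H'.
Qed.

Global Instance app_eqmod_proper k : Proper (eqmod k ==> eqmod k ==> eqmod k) (@app (X * bool)).
Proof.
  intros u u' Hu v v' Hv. transitivity (u ++ v'); [now apply eqmod_app_l | now apply eqmod_app_r].
Qed.

Global Instance winv_eqmod_proper k : Proper (eqmod k ==> eqmod k) (@winv X).
Proof.
  intros u v H. symmetry. apply (eqmod_cancel_l k u).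
  transitivity (v ++ winv v); [now apply eqmod_app_r|].
  now rewrite (winv_r R u), (winv_r R v).
Qed.

Lemma eqmod_lcs k u v : eqmod k u v -> lcs k u -> lcs k v.
Proof.
  unfold eqmod. intros H Hu. pose proof (lcs_app _ _ _ Hu H) as H'.
  now rewrite (cancel_winv_r u) in H'.
Qed.

End PresentedGroup.

Section CommutatorCalculus.
Context {X : Type} (R : word X -> word X -> Prop).
Local Notation "u ≈ v" := (weq R u v) (at level 70).
Local Notation lcs := (lcs R).
Local Notation eqmod := (eqmod R).

Global Instance wcomm_weq_proper : Proper (weq R ==> weq R ==> weq R) (@wcomm X).
Proof. intros x x' Hx y y' Hy. unfold wcomm. now rewrite Hx, Hy. Qed.

Lemma winv_wcomm (x y : word X) : winv (wcomm x y) = wcomm y x.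
Proof. unfold wcomm. rewrite !winv_app, !winv_winv. now rewrite <- !app_assoc. Qed.

Lemma wcomm_same (x : word X) : wcomm x x ≈ [].
Proof. unfold wcomm. rewrite (cancel_winv_l R x). apply winv_l. Qed.

Lemma wcomm_winv_r (x : word X) : wcomm x (winv x) ≈ [].
Proof. unfold wcomm. rewrite winv_winv, (cancel_winv_l R x). apply winv_r. Qed.

Lemma wcomm_winv_l (x : word X) : wcomm (winv x) x ≈ [].
Proof. unfold wcomm. rewrite winv_winv, (cancel_winv_r R x). apply winv_l. Qed.

Lemma wcomm_nil_l (y : word X) : wcomm [] y ≈ [].
Proof. unfold wcomm. simpl. apply winv_l. Qed.

Lemma wcomm_nil_r (x : word X) : wcomm x [] ≈ [].
Proof. unfold wcomm. simpl. rewrite app_nil_r. apply winv_l. Qed.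

Lemma wcomm_winv_conj (x y : word X) : wcomm (winv x) y ≈ x ++ wcomm y x ++ winv x.
Proof.
  unfold wcomm. rewrite winv_winv, <- !app_assoc.
  now rewrite (winv_r R x), app_nil_r.
Qed.

Lemma wcomm_of_commute (x y : word X) : x ++ y ≈ y ++ x -> wcomm x y ≈ [].
Proof.
  intros E. unfold wcomm. rewrite E, (cancel_winv_l R y). apply winv_l.
Qed.

Lemma wcomm_app_l (u v w : word X) :
  wcomm (u ++ v) w ≈ (winv v ++ wcomm u w ++ v) ++ wcomm v w.
Proof.
  unfold wcomm. rewrite !winv_app, <- !app_assoc.
  now rewrite (cancel_winv_r R v), (cancel_winv_r R w).
Qed.

Lemma wcomm_app_r (u v w : word X) :
  wcomm u (v ++ w) ≈ wcomm u w ++ (winv w ++ wcomm u v ++ w).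
Proof.
  unfold wcomm. rewrite !winv_app, <- !app_assoc.
  now rewrite (cancel_winv_r R w), (cancel_winv_r R u).
Qed.

Lemma lcs_wcomm_r k x y : lcs k y -> lcs (S k) (wcomm x y).
Proof. intros H. rewrite <- (winv_wcomm y x). now apply lcs_winv, lcs_wcomm_l. Qed.

Lemma eqmod_conj_lcs k c g : lcs k c -> eqmod (S k) c (winv g ++ c ++ g).
Proof. apply lcs_wcomm_l. Qed.

Lemma eqmod_commute k u v : lcs k u -> eqmod (S k) (u ++ v) (v ++ u).
Proof.
  intros Hu. unfold eqmod. rewrite winv_app, <- app_assoc.
  apply lcs_wcomm_r, Hu.
Qed.

Lemma eqmod2_conj x y u : u ++ x ≈ y ++ u -> eqmod 2 x y.
Proof.
  intros E. apply (eqmod_cancel_l R 2 u). rewrite E.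
  apply eqmod_commute, lcs_le1; lia.
Qed.

Lemma eqmod2_braid x y : x ++ y ++ x ≈ y ++ x ++ y -> eqmod 2 x y.
Proof.
  intros E. assert (Hc : forall u v, eqmod 2 (u ++ v) (v ++ u))
    by (intros u v; apply eqmod_commute, lcs_le1; lia).
  assert (H : eqmod 2 (x ++ y) (y ++ y)).
  { apply (eqmod_cancel_l R 2 x). transitivity (x ++ y ++ x); [apply eqmod_app_l, Hc|].
    rewrite E, Hc. now rewrite <- app_assoc. }
  apply (eqmod_cancel_l R 2 y). now rewrite Hc.
Qed.

Lemma wcomm_app_l_mod3 (u v w : word X) :
  eqmod 3 (wcomm (u ++ v) w) (wcomm u w ++ wcomm v w).
Proof.
  rewrite wcomm_app_l. apply eqmod_app_r. symmetry.
  apply eqmod_conj_lcs, lcs_wcomm_l, lcs_le1; lia.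
Qed.

Lemma wcomm_app_r_mod3 (u v w : word X) :
  eqmod 3 (wcomm u (v ++ w)) (wcomm u v ++ wcomm u w).
Proof.
  rewrite wcomm_app_r. transitivity (wcomm u w ++ wcomm u v).
  - apply eqmod_app_l. symmetry. apply eqmod_conj_lcs, lcs_wcomm_l, lcs_le1; lia.
  - apply eqmod_commute, lcs_wcomm_l, lcs_le1; lia.
Qed.

Lemma wcomm_winv_l_mod3 x y : eqmod 3 (wcomm (winv x) y) (wcomm y x).
Proof.
  rewrite wcomm_winv_conj. symmetry.
  pose proof (eqmod_conj_lcs 2 (wcomm y x) (winv x)) as H. rewrite winv_winv in H.
  apply H, lcs_wcomm_l, lcs_le1; lia.
Qed.

Lemma wcomm_eqmod_l x x' y : eqmod 2 x x' -> eqmod 3 (wcomm x y) (wcomm x' y).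
Proof.
  intros H. rewrite <- (cancel_winv_r R x x'), wcomm_app_l_mod3.
  rewrite <- (app_nil_r (wcomm x y)) at 1. apply eqmod_app_l.
  apply lcs_wcomm_l, H.
Qed.

Lemma wcomm_eqmod_r x y y' : eqmod 2 y y' -> eqmod 3 (wcomm x y) (wcomm x y').
Proof.
  intros H. rewrite <- (cancel_winv_r R y y'), wcomm_app_r_mod3.
  rewrite <- (app_nil_r (wcomm x y)) at 1. apply eqmod_app_l.
  apply lcs_wcomm_r, H.
Qed.

End CommutatorCalculus.

Definition wmap {X Y : Type} (phi : X -> Y) (w : word X) : word Y :=
  map (fun l => (phi (fst l), snd l)) w.

Section WordMaps.
Context {X Y : Type} (R : word X -> word X -> Prop) (R' : word Y -> word Y -> Prop).
Variable phi : X -> Y.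
Hypothesis phi_weq : forall u v, weq R u v -> weq R' (wmap phi u) (wmap phi v).

Lemma wmap_app u v : wmap phi (u ++ v) = wmap phi u ++ wmap phi v.
Proof. apply map_app. Qed.

Lemma wmap_winv u : wmap phi (winv u) = winv (wmap phi u).
Proof. unfold wmap, winv. now rewrite map_rev, !map_map. Qed.

Lemma lcs_wmap k u : lcs R k u -> lcs R' k (wmap phi u).
Proof.
  revert u. induction k as [|k IH]; intros u H; [exact I|].
  destruct k as [|k]; [exact I|].
  revert u H. apply (@gen_ind _ _ _ (fun u => lcs R' (S (S k)) (wmap phi u))).
  - intros w [x [y [Hx ->]]]. rewrite comm_wcomm. unfold wcomm.
    rewrite !wmap_app, !wmap_winv. now apply lcs_wcomm_l, IH.
  - apply lcs_nil.
  - intros x y Hx Hy. rewrite wmap_app. now apply lcs_app.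
  - intros x Hx. rewrite wmap_winv. now apply lcs_winv.
  - intros x y E. now rewrite (phi_weq _ _ E).
Qed.

End WordMaps.

Section Evaluation.
Context {X : Type} (R : word X -> word X -> Prop).
Context {T : Type} (op : T -> T -> T) (e : T) (h : X * bool -> T).
Hypothesis op_assoc : forall a b c, op a (op b c) = op (op a b) c.
Hypothesis op_e_l : forall a, op e a = a.
Hypothesis op_e_r : forall a, op a e = a.

Definition ev (w : word X) : T := fold_right (fun l a => op (h l) a) e w.

Lemma ev_app u v : ev (u ++ v) = op (ev u) (ev v).
Proof. induction u as [|l u IH]; simpl; [now rewrite op_e_l | now rewrite IH, op_assoc]. Qed.

Lemma ev_weq (h_free : forall a b, op (h (a, b)) (h (a, negb b)) = e)
  (h_rel : forall u v, R u v -> ev u = ev v) :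
  forall u v, weq R u v -> ev u = ev v.
Proof.
  intros u v H. induction H; try congruence.
  - rewrite !ev_app; congruence.
  - simpl. now rewrite op_e_r, h_free.
  - auto.
Qed.

End Evaluation.

(** * Residual nilpotence of Z * Z_2 *)

(* Power series over F_2 in non-commuting variables x = false and y = true, given
   by their coefficients on monomials.  [mul] is the Cauchy product: the sum over
   the factorisations m = m1 ++ m2, computed by peeling letters off m1. *)
Definition ser := list bool -> bool.

Definition one : ser := fun m => match m with [] => true | _ => false end.
Definition add (p q : ser) : ser := fun m => xorb (p m) (q m).
Definition scal (b : bool) (p : ser) : ser := fun m => b && p m.
Definition lshift (c : bool) (p : ser) : ser := fun t => p (c :: t).

Fixpoint mul (p q : ser) (m : list bool) : bool :=
  match m with
  | [] => p [] && q []
  | c :: m' => xorb (p [] && q m) (mul (lshift c p) q m')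
  end.

Lemma mul_cons p q c m : mul p q (c :: m) = xorb (p [] && q (c :: m)) (mul (lshift c p) q m).
Proof. reflexivity. Qed.

Lemma mul_ext m p p' q q' :
  (forall m1 m2, m1 ++ m2 = m -> p m1 = p' m1 /\ q m2 = q' m2) -> mul p q m = mul p' q' m.
Proof.
  revert p p'. induction m as [|c m IH]; intros p p' H.
  - simpl. destruct (H [] [] eq_refl) as [-> ->]. reflexivity.
  - rewrite !mul_cons. destruct (H [] (c :: m) eq_refl) as [-> ->]. f_equal.
    apply IH. intros m1 m2 E. apply (H (c :: m1) m2). simpl; congruence.
Qed.

Lemma mul_zero m p q :
  (forall m1 m2, m1 ++ m2 = m -> p m1 && q m2 = false) -> mul p q m = false.
Proof.
  revert p. induction m as [|c m IH]; intros p H.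
  - now apply (H [] []).
  - rewrite mul_cons, (H [] (c :: m) eq_refl). simpl.
    apply IH. intros m1 m2 E. apply (H (c :: m1) m2). simpl; congruence.
Qed.

Lemma mul_one_l q : mul one q = q.
Proof.
  apply functional_extensionality. intros [|c m]; [reflexivity|].
  rewrite mul_cons, mul_zero; [apply xorb_false_r | reflexivity].
Qed.

Lemma mul_one_r p : mul p one = p.
Proof.
  apply functional_extensionality. intros m. revert p.
  induction m as [|c m IH]; intros p; simpl; [apply andb_true_r|].
  rewrite andb_false_r. apply IH.
Qed.

Lemma mul_add_l p p' q : mul (add p p') q = add (mul p q) (mul p' q).
Proof.
  apply functional_extensionality. intros m. revert p p'.
  induction m as [|c m IH]; intros p p'; [unfold add; simpl; btauto|].
  rewrite mul_cons. change (lshift c (add p p')) with (add (lshift c p) (lshift c p')).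
  rewrite IH. unfold add. rewrite !mul_cons. btauto.
Qed.

Lemma mul_add_r p q q' : mul p (add q q') = add (mul p q) (mul p q').
Proof.
  apply functional_extensionality. intros m. revert p.
  induction m as [|c m IH]; intros p; [unfold add; simpl; btauto|].
  rewrite mul_cons, IH. unfold add. rewrite !mul_cons. btauto.
Qed.

Lemma mul_scal_l b p q : mul (scal b p) q = scal b (mul p q).
Proof.
  apply functional_extensionality. intros m. revert p.
  induction m as [|c m IH]; intros p; [unfold scal; simpl; btauto|].
  rewrite mul_cons. change (lshift c (scal b p)) with (scal b (lshift c p)).
  rewrite IH. unfold scal. rewrite mul_cons. btauto.
Qed.

Lemma mul_assoc p q r : mul (mul p q) r = mul p (mul q r).
Proof.
  apply functional_extensionality. intros m. revert p q.
  induction m as [|c m IH]; intros p q; [simpl; btauto|].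
  rewrite !mul_cons.
  replace (lshift c (mul p q)) with (add (scal (p []) (lshift c q)) (mul (lshift c p) q))
    by (apply functional_extensionality; reflexivity).
  rewrite mul_add_l, mul_scal_l. unfold add, scal. rewrite IH. simpl. btauto.
Qed.

(* The relation y^2 = 0 is imposed by only looking at monomials without yy. *)
Definition no_yy (m : list bool) : Prop := ~ exists u v, m = u ++ true :: true :: v.

Lemma no_yy_app_l m1 m2 : no_yy (m1 ++ m2) -> no_yy m1.
Proof. intros H [u [v ->]]. apply H. exists u, (v ++ m2). now rewrite <- app_assoc. Qed.

Lemma no_yy_app_r m1 m2 : no_yy (m1 ++ m2) -> no_yy m2.
Proof. intros H [u [v ->]]. apply H. exists (m1 ++ u), v. now rewrite <- app_assoc. Qed.

Lemma no_yy_nil : no_yy [].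
Proof. intros [[|] [v E]]; discriminate. Qed.

Lemma no_yy_cons_false m : no_yy m -> no_yy (false :: m).
Proof. intros H [[|a u] [v E]]; [discriminate|]. injection E as _ E. apply H. eauto. Qed.

Lemma no_yy_cons_true m : no_yy m -> hd_error m <> Some true -> no_yy (true :: m).
Proof.
  intros H Hh [[|a u] [v E]]; injection E as E.
  - subst. simpl in Hh. congruence.
  - apply H. eauto.
Qed.

Definition eqv (p q : ser) : Prop := forall m, no_yy m -> p m = q m.

Global Instance eqv_equiv : Equivalence eqv.
Proof.
  split; unfold eqv; [now intros p m _ | intros p q H m V; now rewrite H
  | intros p q r H1 H2 m V; now rewrite H1, H2].
Qed.

Global Instance mul_eqv_proper : Proper (eqv ==> eqv ==> eqv) mul.
Proof.
  intros p p' Hp q q' Hq m V. apply mul_ext. intros m1 m2 <-. split.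
  - apply Hp. eapply no_yy_app_l; eauto.
  - apply Hq. eapply no_yy_app_r; eauto.
Qed.

Definition vanish_below (k : nat) (p : ser) : Prop :=
  forall m, no_yy m -> length m < k -> p m = false.

Lemma vanish_below_0 p : vanish_below 0 p.
Proof. intros m _ L. lia. Qed.

Lemma vanish_below_add k p q : vanish_below k p -> vanish_below k q -> vanish_below k (add p q).
Proof. intros H1 H2 m V L. unfold add. now rewrite H1, H2. Qed.

Lemma vanish_below_mul j k p q :
  vanish_below j p -> vanish_below k q -> vanish_below (j + k) (mul p q).
Proof.
  intros Hp Hq m V L. apply mul_zero. intros m1 m2 <-.
  rewrite length_app in L. destruct (Nat.lt_ge_cases (length m1) j).
  - rewrite Hp; [reflexivity | eapply no_yy_app_l; eauto | lia].
  - rewrite Hq; [apply andb_false_r | eapply no_yy_app_r; eauto | lia].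
Qed.

Global Instance vanish_below_proper k : Proper (eqv ==> iff) (vanish_below k).
Proof. intros p q E; split; intros H m V L; [rewrite <- E | rewrite E]; auto. Qed.

Definition x_plus_1 : ser := fun m => match m with [] | [false] => true | _ => false end.
Definition x_geom : ser := forallb negb.
Definition y_plus_1 : ser := fun m => match m with [] | [true] => true | _ => false end.

(* a |-> 1 + x, a^-1 |-> 1 + x + x^2 + ... = (1 + x)^-1, b^(+-1) |-> 1 + y. *)
Definition letter (l : bool * bool) : ser :=
  match l with (true, false) => x_plus_1 | (true, true) => x_geom | (false, _) => y_plus_1 end.

Definition magnus (w : word bool) : ser := fold_right (fun l s => mul (letter l) s) one w.

Lemma magnus_cons l w : magnus (l :: w) = mul (letter l) (magnus w).
Proof. reflexivity. Qed.

Lemma magnus_app u v : magnus (u ++ v) = mul (magnus u) (magnus v).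
Proof.
  induction u as [|l u IH]; simpl; [now rewrite mul_one_l|].
  now rewrite IH, mul_assoc.
Qed.

Lemma magnus_empty_coef w : magnus w [] = true.
Proof. induction w as [|[[|] [|]] w IH]; simpl; auto. Qed.

Lemma x_plus_1_geom : mul x_plus_1 x_geom = one.
Proof.
  apply functional_extensionality. intros [|[|] m]; [reflexivity | |].
  - rewrite mul_cons, mul_zero; reflexivity.
  - rewrite mul_cons. replace (lshift false x_plus_1) with one
      by (apply functional_extensionality; intros [|? ?]; reflexivity).
    rewrite mul_one_l. apply xorb_nilpotent.
Qed.

Lemma x_geom_plus_1 : mul x_geom x_plus_1 = one.
Proof.
  apply functional_extensionality. intros m.
  induction m as [|[|] m IH]; [reflexivity | |].
  - rewrite mul_cons, mul_zero; reflexivity.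
  - rewrite mul_cons. change (lshift false x_geom) with x_geom. rewrite IH.
    destruct m; reflexivity.
Qed.

Lemma y_plus_1_sq : eqv (mul y_plus_1 y_plus_1) one.
Proof.
  intros [|[|] m] V; [reflexivity | |].
  - rewrite mul_cons. replace (lshift true y_plus_1) with one
      by (apply functional_extensionality; intros [|? ?]; reflexivity).
    rewrite mul_one_l. destruct m as [|[|] m]; try reflexivity.
    exfalso. apply V. now exists [], m.
  - rewrite mul_cons, mul_zero; reflexivity.
Qed.

Lemma magnus_weq u v : weq ZZ2rel u v -> eqv (magnus u) (magnus v).
Proof.
  intros H. induction H as [| | |u u' v v' _ Hu _ Hv|a b|u v [-> ->]].
  - reflexivity.
  - now symmetry.
  - etransitivity; eauto.
  - rewrite !magnus_app. now rewrite Hu, Hv.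
  - simpl. rewrite mul_one_r. destruct a, b; simpl.
    + now rewrite x_geom_plus_1.
    + now rewrite x_plus_1_geom.
    + apply y_plus_1_sq.
    + apply y_plus_1_sq.
  - simpl. rewrite mul_one_r. apply y_plus_1_sq.
Qed.

Global Instance add_eqv_proper : Proper (eqv ==> eqv ==> eqv) add.
Proof. intros p p' Hp q q' Hq m V. unfold add. now rewrite Hp, Hq. Qed.

Lemma add_comm p q : add p q = add q p.
Proof. apply functional_extensionality. intros m. apply xorb_comm. Qed.

Lemma add_cancel_r p q : add (add p q) q = p.
Proof. apply functional_extensionality. intros m. unfold add. btauto. Qed.

Definition dev (p : ser) : ser := add p one.

Lemma mul_comm_dev p q :
  mul p q = add (mul q p) (add (mul (dev p) (dev q)) (mul (dev q) (dev p))).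
Proof.
  unfold dev. rewrite !mul_add_l, !mul_add_r, !mul_one_l, !mul_one_r.
  apply functional_extensionality. intros m. unfold add. btauto.
Qed.

Lemma dev_mul p q : dev (mul p q) = add (mul (dev p) (dev q)) (add (dev p) (dev q)).
Proof.
  unfold dev. rewrite !mul_add_l, !mul_add_r, !mul_one_l, !mul_one_r.
  apply functional_extensionality. intros m. unfold add. btauto.
Qed.

(* p' q' p q - 1 = p' q' (p q - q p) and p q - q p = (p-1)(q-1) - (q-1)(p-1). *)
Lemma vanish_below_dev_comm k p p' q q' :
  eqv (mul p' p) one -> eqv (mul q' q) one ->
  vanish_below k (dev p) -> vanish_below 1 (dev q) ->
  vanish_below (S k) (dev (mul p' (mul q' (mul p q)))).
Proof.
  intros Hp Hq Vp Vq.
  set (E := add (mul (dev p) (dev q)) (mul (dev q) (dev p))).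
  assert (VE : vanish_below (S k) E).
  { apply vanish_below_add.
    - replace (S k) with (k + 1) by lia. now apply vanish_below_mul.
    - replace (S k) with (1 + k) by lia. now apply vanish_below_mul. }
  assert (Eqp : eqv (mul p' (mul q' (mul q p))) one).
  { rewrite <- (mul_assoc q'), Hq, mul_one_l. exact Hp. }
  rewrite (mul_comm_dev p q). fold E. unfold dev.
  rewrite !mul_add_r, Eqp, (add_comm one), add_cancel_r.
  apply (vanish_below_mul 0 (S k)), (vanish_below_mul 0 (S k)); auto using vanish_below_0.
Qed.

Lemma magnus_winv_l u : eqv (mul (magnus (winv u)) (magnus u)) one.
Proof. rewrite <- magnus_app. apply (magnus_weq _ _ (winv_l _ u)). Qed.

Lemma vanish_below_1_dev_magnus w : vanish_below 1 (dev (magnus w)).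
Proof.
  intros [|c m] _ L; [|simpl in L; lia].
  unfold dev, add. now rewrite magnus_empty_coef.
Qed.

Lemma magnus_lcs k w : 1 <= k -> lcs ZZ2rel k w -> vanish_below k (dev (magnus w)).
Proof.
  intros Hk. revert w. induction k as [|k IH]; [lia|].
  destruct k as [|k]; [intros w _; apply vanish_below_1_dev_magnus|].
  apply (@gen_ind _ _ _ (fun w => vanish_below (S (S k)) (dev (magnus w)))).
  - intros w [x [y [Hx ->]]]. rewrite comm_wcomm. unfold wcomm. rewrite !magnus_app.
    apply vanish_below_dev_comm; auto using magnus_winv_l, vanish_below_1_dev_magnus.
    apply IH; [lia | exact Hx].
  - intros m _ _. apply xorb_nilpotent.
  - intros x y Hx Hy. rewrite magnus_app, dev_mul.
    apply vanish_below_add; [|now apply vanish_below_add].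
    now apply (vanish_below_mul 0); [apply vanish_below_0|].
  - intros x Hx.
    assert (E : eqv (dev (magnus (winv x))) (mul (magnus (winv x)) (dev (magnus x)))).
    { unfold dev. rewrite mul_add_r, magnus_winv_l, mul_one_r. now rewrite add_comm. }
    rewrite E. now apply (vanish_below_mul 0); [apply vanish_below_0|].
  - intros x y Exy. unfold dev. now rewrite (magnus_weq _ _ Exy).
Qed.

Lemma magnus_residual w : (forall i, 1 <= i -> lcs ZZ2rel i w) -> eqv (magnus w) one.
Proof.
  intros H m V.
  assert (Hk : 1 <= S (length m)) by lia.
  pose proof (magnus_lcs _ w Hk (H _ Hk) m V (Nat.lt_succ_diag_r _)) as E.
  unfold dev, add in E. now destruct (magnus w m), (one m).
Qed.

Section FreeProduct.

Local Notation "u ≈ v" := (weq ZZ2rel u v) (at level 70).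
Local Notation a := (true, false).
Local Notation a' := (true, true).
Local Notation b := (false, false).

Inductive syl := SA (n : Z) | SB.

Fixpoint reduced (t : list syl) : Prop :=
  match t with
  | [] => True
  | SA n :: r => n <> 0%Z /\ match r with SA _ :: _ => False | _ => True end /\ reduced r
  | SB :: r => match r with SB :: _ => False | _ => True end /\ reduced r
  end.

Definition push (l : bool * bool) (t : list syl) : list syl :=
  match l with
  | (true, e) =>
      let d := if e then (-1)%Z else 1%Z in
      match t with
      | SA n :: r => if Z.eqb (n + d) 0 then r else SA (n + d) :: r
      | _ => SA d :: t
      end
  | (false, _) => match t with SB :: r => r | _ => SB :: t end
  end.

Definition reduce (w : word bool) : list syl := fold_right push [] w.

Definition syl_word (s : syl) : word bool :=
  match s with
  | SA n => if Z.ltb 0 n then repeat a (Z.to_nat n) else repeat a' (Z.to_nat (- n))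
  | SB => [b]
  end.

Definition embed (t : list syl) : word bool := flat_map syl_word t.

Lemma push_reduced l t : reduced t -> reduced (push l t).
Proof.
  destruct l as [[|] e]; destruct t as [|[n|] r]; simpl; intros H; try tauto.
  - destruct e; simpl; repeat split; try discriminate; tauto.
  - destruct e; [destruct (Z.eqb_spec (n + -1) 0) | destruct (Z.eqb_spec (n + 1) 0)];
      simpl; tauto.
  - destruct e; simpl; repeat split; try discriminate; tauto.
Qed.

Lemma cancel_bb w : b :: b :: w ≈ w.
Proof. exact (weq_cat (weq_rel ZZ2rel _ _ (conj eq_refl eq_refl)) (weq_refl _ w)). Qed.

Lemma b_inv w : (false, true) :: w ≈ b :: w.
Proof.
  rewrite <- (cancel_bb w) at 1. apply (weq_free_at _ [] _ false true).
Qed.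

Lemma push_embed l t : reduced t -> l :: embed t ≈ embed (push l t).
Proof.
  intros Ht. destruct l as [[|] e].
  - destruct t as [|[n|] r]; [destruct e; reflexivity | | destruct e; reflexivity].
    destruct Ht as [Hn _]. destruct e; cbn [push].
    + destruct (Z.eqb_spec (n + -1) 0) as [E|E]; cbn [embed flat_map syl_word].
      * replace n with 1%Z by lia. apply (weq_free_at _ [] _ true true).
      * destruct (Z.ltb_spec 0 n), (Z.ltb_spec 0 (n + -1)); try lia.
        -- replace (Z.to_nat n) with (S (Z.to_nat (n + -1))) by lia.
           apply (weq_free_at _ [] _ true true).
        -- replace (Z.to_nat (- (n + -1))) with (S (Z.to_nat (- n))) by lia. reflexivity.
    + destruct (Z.eqb_spec (n + 1) 0) as [E|E]; cbn [embed flat_map syl_word].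
      * replace n with (-1)%Z by lia. apply (weq_free_at _ [] _ true false).
      * destruct (Z.ltb_spec 0 n), (Z.ltb_spec 0 (n + 1)); try lia.
        -- replace (Z.to_nat (n + 1)) with (S (Z.to_nat n)) by lia. reflexivity.
        -- replace (Z.to_nat (- n)) with (S (Z.to_nat (- (n + 1)))) by lia.
           apply (weq_free_at _ [] _ true false).
  - destruct t as [|[n|] r]; destruct e; cbn; rewrite ?b_inv; try apply cancel_bb; reflexivity.
Qed.

Lemma reduce_spec w : reduced (reduce w) /\ w ≈ embed (reduce w).
Proof.
  induction w as [|l w [Hw E]]; [split; [exact I | reflexivity]|].
  split; simpl; [now apply push_reduced|].
  rewrite <- push_embed by exact Hw. now rewrite E at 1.
Qed.

Definition ycount (m : list bool) : nat := length (filter (fun c => c) m).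
Definition bcount (w : word bool) : nat := length (filter (fun l => negb (fst l)) w).

Lemma ycount_app m1 m2 : ycount (m1 ++ m2) = ycount m1 + ycount m2.
Proof. unfold ycount. now rewrite filter_app, length_app. Qed.

Lemma ycount_cons c m : ycount (c :: m) = (if c then 1 else 0) + ycount m.
Proof. now destruct c. Qed.

Lemma ycount_xs d : ycount (repeat false d) = 0.
Proof. induction d; auto. Qed.

Lemma bcount_embed_cons s t : bcount (embed (s :: t)) = bcount (syl_word s) + bcount (embed t).
Proof. unfold bcount, embed. cbn [flat_map]. now rewrite filter_app, length_app. Qed.

Lemma bcount_syl_word n : bcount (syl_word (SA n)) = 0.
Proof. unfold syl_word. destruct (0 <? n)%Z; induction (Z.to_nat _); auto. Qed.

Lemma letter_ycount (l : bool * bool) m : (if fst l then 0 else 1) < ycount m -> letter l m = false.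
Proof.
  unfold ycount. destruct l as [[|] [|]]; simpl.
  - induction m as [|[|] m IH]; simpl; intros H; auto; lia.
  - destruct m as [|[|] [|[|] m]]; simpl; intros; auto; lia.
  - destruct m as [|[|] [|[|] m]]; simpl; intros; auto; lia.
  - destruct m as [|[|] [|[|] m]]; simpl; intros; auto; lia.
Qed.

Lemma magnus_ycount w m : bcount w < ycount m -> magnus w m = false.
Proof.
  revert m. induction w as [|l w IH]; intros m H.
  - destruct m as [|[|] m]; [|reflexivity ..]. unfold bcount, ycount in H. simpl in H. lia.
  - rewrite magnus_cons. apply mul_zero. intros m1 m2 <-. rewrite ycount_app in H.
    destruct (Nat.lt_ge_cases (bcount w) (ycount m2)).
    + rewrite IH; auto using andb_false_r.
    + rewrite letter_ycount; [reflexivity|].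
      unfold bcount in *. destruct l as [[|] ?]; simpl in *; lia.
Qed.

Lemma no_yy_xs_app d M : no_yy M -> no_yy (repeat false d ++ M).
Proof. intros H. induction d; simpl; auto using no_yy_cons_false. Qed.

Lemma mul_x_plus_1_xs q d :
  mul x_plus_1 q (repeat false (S d)) = xorb (q (repeat false (S d))) (q (repeat false d)).
Proof.
  cbn [repeat]. rewrite mul_cons.
  replace (lshift false x_plus_1) with one
    by (apply functional_extensionality; intros [|? ?]; reflexivity).
  now rewrite mul_one_l.
Qed.

Lemma magnus_a_pow k :
  magnus (repeat a k) (repeat false k) = true /\
  forall j, k < j -> magnus (repeat a k) (repeat false j) = false.
Proof.
  induction k as [|k [IH1 IH2]].
  - split; [reflexivity|]. intros [|j] H; [lia | reflexivity].
  - change (magnus (repeat a (S k))) with (mul x_plus_1 (magnus (repeat a k))). split.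
    + rewrite mul_x_plus_1_xs, IH1, IH2 by lia. reflexivity.
    + intros [|j] H; [lia|]. rewrite mul_x_plus_1_xs, !IH2 by lia. reflexivity.
Qed.

Lemma mul_xs_top p q j : (forall i, 0 < i <= j -> q (repeat false i) = false) ->
  mul p q (repeat false j) = p (repeat false j) && q [].
Proof.
  revert p. induction j as [|j IH]; intros p H; [reflexivity|].
  cbn [repeat]. rewrite mul_cons.
  assert (Hq : q (false :: repeat false j) = false) by exact (H (S j) ltac:(lia)).
  rewrite Hq, andb_false_r, IH; [reflexivity|]. intros i Hi. apply H. lia.
Qed.

Lemma xs_coef_dec q j :
  (exists i, 0 < i <= j /\ q (repeat false i) = true) \/
  (forall i, 0 < i <= j -> q (repeat false i) = false).
Proof.
  induction j as [|j [[i [Hi E]] | H]]; [right; lia | left; exists i; split; [lia | exact E]|].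
  destruct (q (repeat false (S j))) eqn:E; [left; exists (S j); split; [lia | exact E]|].
  right. intros i Hi. destruct (Nat.eq_dec i (S j)) as [->|]; [exact E | apply H; lia].
Qed.

Lemma winv_repeat (l : bool * bool) k : winv (repeat l k) = repeat (fst l, negb (snd l)) k.
Proof. unfold winv. now rewrite map_repeat, rev_repeat. Qed.

(* For a^-k, the coefficients of x^1, ..., x^k cannot all vanish, since multiplying
   by (1 + x)^k would then leave 1 + x^k + ... instead of 1. *)
Lemma syl_detect n : n <> 0%Z ->
  exists d, 0 < d /\ magnus (syl_word (SA n)) (repeat false d) = true.
Proof.
  intros Hn. unfold syl_word. destruct (Z.ltb_spec 0 n) as [Hpos | Hneg].
  - exists (Z.to_nat n). split; [lia | apply magnus_a_pow].
  - assert (Hk : 0 < Z.to_nat (- n)) by lia. set (k := Z.to_nat (- n)) in *.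
    destruct (xs_coef_dec (magnus (repeat a' k)) k) as [[d [Hd E]] | H];
      [exists d; split; [lia | exact E]|].
    exfalso.
    assert (Inv : eqv (mul (magnus (repeat a k)) (magnus (repeat a' k))) one).
    { replace (repeat a' k) with (winv (repeat a k)) by apply winv_repeat.
      rewrite <- magnus_app. apply (magnus_weq _ _ (winv_r _ _)). }
    assert (V : no_yy (repeat false k))
      by (rewrite <- (app_nil_r (repeat false k)); apply no_yy_xs_app, no_yy_nil).
    pose proof (Inv _ V) as E.
    rewrite mul_xs_top, (proj1 (magnus_a_pow k)), magnus_empty_coef in E by exact H.
    destruct k; [lia | discriminate].
Qed.

Lemma mul_y_plus_1_cons q c m : mul y_plus_1 q (c :: m) = xorb (q (c :: m)) (c && q m).
Proof.
  rewrite mul_cons. destruct c.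
  - replace (lshift true y_plus_1) with one
      by (apply functional_extensionality; intros [|? ?]; reflexivity).
    now rewrite mul_one_l.
  - rewrite mul_zero; [simpl; now rewrite !xorb_false_r | reflexivity].
Qed.

Lemma mul_split_y p q d M :
  (forall m, 0 < ycount m -> p m = false) ->
  (forall j, 0 < j -> q (repeat false j ++ true :: M) = false) ->
  mul p q (repeat false d ++ true :: M) = p (repeat false d) && q (true :: M).
Proof.
  revert p. induction d as [|d IH]; intros p Hp Hq.
  - cbn [repeat app]. rewrite mul_cons, mul_zero; [apply xorb_false_r|].
    intros m1 m2 _. unfold lshift. rewrite Hp; [reflexivity|].
    unfold ycount. simpl. lia.
  - cbn [repeat app]. rewrite mul_cons.
    assert (Hq0 : q (false :: repeat false d ++ true :: M) = false) by exact (Hq (S d) ltac:(lia)).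
    rewrite Hq0, andb_false_r. apply IH; [|exact Hq]. intros m Hm. now apply Hp.
Qed.

Lemma magnus_b_cons_y w M : ycount M = bcount w ->
  magnus (b :: w) (true :: M) = magnus w M.
Proof.
  intros C. rewrite magnus_cons. change (letter b) with y_plus_1.
  rewrite mul_y_plus_1_cons, magnus_ycount; [reflexivity|]. rewrite ycount_cons. lia.
Qed.

Lemma magnus_b_cons_xs_y w j M : ycount M = bcount w -> 0 < j ->
  magnus (b :: w) (repeat false j ++ true :: M) = false.
Proof.
  intros C Hj. destruct j as [|j]; [lia|]. rewrite magnus_cons. change (letter b) with y_plus_1.
  cbn [repeat app]. rewrite mul_y_plus_1_cons, magnus_ycount; [reflexivity|].
  rewrite ycount_cons, ycount_app, ycount_xs, ycount_cons. lia.
Qed.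

Definition syl_letter (s : syl) : bool := match s with SA _ => false | SB => true end.

(* A reduced form a^n1 b a^n2 b ... is detected by the monomial x^d1 y x^d2 y ...,
   with the d_i given by [syl_detect]. *)
Lemma magnus_reduced_detect t : reduced t ->
  exists M, no_yy M /\ ycount M = bcount (embed t) /\
    hd_error M = option_map syl_letter (hd_error t) /\ magnus (embed t) M = true.
Proof.
  induction t as [|[n|] r IH]; intros Ht.
  - exists []. repeat split. apply no_yy_nil.
  - destruct Ht as [Hn [Hr Ht]]. destruct (IH Ht) as [M [HM [CM [HdM EM]]]].
    destruct (syl_detect n Hn) as [d [Hd Ed]].
    exists (repeat false d ++ M). repeat split.
    + now apply no_yy_xs_app.
    + rewrite ycount_app, ycount_xs, bcount_embed_cons, bcount_syl_word. exact CM.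
    + destruct d; [lia | reflexivity].
    + change (embed (SA n :: r)) with (syl_word (SA n) ++ embed r). rewrite magnus_app.
      destruct r as [|[n'|] r']; [| contradiction |].
      * destruct M; [|discriminate]. change (magnus (embed [])) with one.
        now rewrite app_nil_r, mul_one_r.
      * destruct M as [|c M']; [discriminate|]. injection HdM as ->.
        rewrite bcount_embed_cons, ycount_cons in CM. change (bcount (syl_word SB)) with 1 in CM.
        rewrite mul_split_y, Ed; [exact EM | |].
        -- intros m Hm. apply magnus_ycount. now rewrite bcount_syl_word.
        -- intros j Hj. change (embed (SB :: r')) with (b :: embed r').
           apply magnus_b_cons_xs_y; [lia | exact Hj].
  - destruct Ht as [Hr Ht]. destruct (IH Ht) as [M [HM [CM [HdM EM]]]].
    exists (true :: M). repeat split.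
    + apply no_yy_cons_true; [exact HM|]. rewrite HdM.
      destruct r as [|[n'|] r']; [discriminate | discriminate | contradiction].
    + rewrite ycount_cons, bcount_embed_cons. simpl. lia.
    + change (embed (SB :: r)) with (b :: embed r). now rewrite magnus_b_cons_y.
Qed.

Lemma Z_free_Z2_resid_nilp : resid_nilp Z_free_Z2.
Proof.
  intros w H. change (weq ZZ2rel w []).
  assert (Hw : eqv (magnus w) one) by (apply magnus_residual; exact H).
  destruct (reduce_spec w) as [Hred E].
  destruct (reduce w) as [|s t] eqn:Er; [exact E|]. exfalso.
  destruct (magnus_reduced_detect _ Hred) as [M [HM [_ [Hd EM]]]].
  rewrite <- (magnus_weq _ _ E M HM), (Hw M HM) in EM.
  destruct M; [discriminate Hd | discriminate EM].
Qed.

End FreeProduct.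

(** * Virtual braid groups *)

Lemma idx_eq n (i j : idx n) : proj1_sig i = proj1_sig j -> i = j.
Proof.
  destruct i as [i [Hi1 Hi2]], j as [j [Hj1 Hj2]]; simpl. intros ->.
  f_equal. f_equal; apply Peano_dec.le_unique.
Qed.

Definition mkidx n i (H : 1 <= i < n) : idx n := exist _ i H.

Section VirtualBraids.
Variable n : nat.
Local Notation W := (word (VBgen n)).
Local Notation "u ≈ v" := (weq (@VBrel n) u v) (at level 70).

Lemma rho_sq a : [rh a; rh a] ≈ ([] : W).
Proof. apply weq_rel. do 4 right; left. eauto. Qed.

Lemma rho_inv a : [((false, a), true)] ≈ ([rh a] : W).
Proof.
  transitivity ([((false, a), true)] ++ [rh a; rh a]); [now rewrite rho_sq|].
  exact (weq_free_at _ [] [rh a] (false, a) true).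
Qed.

Definition swap_at (i k : nat) : nat := if k =? i then S i else if k =? S i then i else k.

Ltac swap_cases :=
  unfold swap_at; repeat match goal with
  | |- context [Nat.eqb ?x ?y] =>
      lazymatch x with context [if _ then _ else _] => fail | _ =>
      lazymatch y with context [if _ then _ else _] => fail | _ =>
        destruct (Nat.eqb_spec x y) end end end; lia.

Lemma swap_at_invol i k : swap_at i (swap_at i k) = k.
Proof. swap_cases. Qed.

Lemma swap_at_far i j k : i + 2 <= j \/ j + 2 <= i ->
  swap_at i (swap_at j k) = swap_at j (swap_at i k).
Proof. intros. swap_cases. Qed.

Lemma swap_at_braid i k :
  swap_at i (swap_at (S i) (swap_at i k)) = swap_at (S i) (swap_at i (swap_at (S i) k)).
Proof. swap_cases. Qed.

Definition perm_letter (l : VBgen n * bool) : nat -> nat := swap_at (proj1_sig (snd (fst l))).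
Definition perm_ev : W -> nat -> nat := ev (fun f g k => f (g k)) (fun k => k) perm_letter.

Lemma perm_ev_weq u v : u ≈ v -> perm_ev u = perm_ev v.
Proof.
  apply ev_weq; try reflexivity.
  - intros l e. apply functional_extensionality. intros k. apply swap_at_invol.
  - intros u' v' H. unfold perm_ev, ev, perm_letter, next, far in *.
    destruct H as [[a [b [N [-> ->]]]]|[[a [b [N [-> ->]]]]|[[a [b [N [-> ->]]]]|
      [[a [b [N [-> ->]]]]|[[a [-> ->]]|[[a [b [N [-> ->]]]]|[a [b [N [-> ->]]]]]]]]]];
    apply functional_extensionality; intros k; simpl;
    rewrite ?N; auto using swap_at_invol, swap_at_far, swap_at_braid.
Qed.

End VirtualBraids.

Section NotResiduallyNilpotent.
Variable n : nat.
Hypothesis Hn : 3 <= n.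
Local Notation W := (word (VBgen n)).
Local Notation "u ≈ v" := (weq (@VBrel n) u v) (at level 70).

Let i1 : idx n := mkidx n 1 (conj (le_n 1) (ltac:(lia) : 1 < n)).
Let i2 : idx n := mkidx n 2 (conj (le_S _ _ (le_n 1)) (ltac:(lia) : 2 < n)).

Definition sigma12 : W := [((true, i1), true); sg i2].

(* With s = sigma_1, x = s^-1 sigma_2: [s^-1 x s, s] = x^-1, by the braid relation. *)
Lemma sigma12_comm_identity :
  sigma12 ≈ winv (wcomm (winv [sg i1] ++ sigma12 ++ [sg i1]) [sg i1]).
Proof.
  rewrite winv_wcomm. unfold wcomm, sigma12. cbn.
  set (S := sg i1). set (T := sg i2).
  set (S' := ((true, i1), true)). set (T' := ((true, i2), true)).
  symmetry.
  transitivity [S'; S'; T'; S; S; S'; T; S].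
  { apply (weq_free_at _ [S'; S'; T'; S; S] [S'; T; S] (true, i1) false). }
  transitivity [S'; S'; T'; S; T; S].
  { apply (weq_free_at _ [S'; S'; T'; S] [T; S] (true, i1) false). }
  transitivity [S'; S'; T'; T; S; T].
  { apply (weq_rel_at _ [S'; S'; T'] [] [S; T; S] [T; S; T]). left. now exists i1, i2. }
  transitivity [S'; S'; S; T].
  { apply (weq_free_at _ [S'; S'] [S; T] (true, i2) true). }
  apply (weq_free_at _ [S'] [T] (true, i1) true).
Qed.

Lemma sigma12_lcs k : lcs (@VBrel n) k sigma12.
Proof.
  induction k as [|k IH]; [exact I|].
  rewrite sigma12_comm_identity. apply lcs_winv, lcs_wcomm_l, lcs_conj, IH.
Qed.

Lemma sigma12_nontrivial : ~ sigma12 ≈ [].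
Proof.
  intros H. apply perm_ev_weq, (f_equal (fun f => f 2)) in H.
  unfold perm_ev, ev, perm_letter, sigma12 in H. simpl in H. discriminate.
Qed.

Lemma VB_not_resid_nilp : ~ resid_nilp (VB n).
Proof. intros H. apply sigma12_nontrivial, (H sigma12). intros i _. apply sigma12_lcs. Qed.

End NotResiduallyNilpotent.

(** * The first two lower central quotients of VB_n *)

Section Abelianization.
Variable n : nat.
Hypothesis Hn : 2 <= n.
Local Notation W := (word (VBgen n)).
Local Notation "u ≈ v" := (weq (@VBrel n) u v) (at level 70).
Local Notation eqmod := (eqmod (@VBrel n)).

Definition j1 : idx n := mkidx n 1 (conj (le_n 1) (ltac:(lia) : 1 < n)).

Lemma eqmod2_j1 (f : idx n -> VBgen n * bool) :
  (forall a b, next a b -> eqmod 2 [f a] [f b]) -> forall a, eqmod 2 [f a] [f j1].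
Proof.
  intros Hadj [i H]. change (exist _ i H) with (mkidx n i H). revert H.
  induction i as [|[|i] IH]; intros H; [lia | now rewrite (idx_eq _ (mkidx n 1 H) j1 eq_refl)|].
  assert (H' : 1 <= S i < n) by lia. rewrite <- (IH H'). symmetry. now apply Hadj.
Qed.

Lemma sigma_eqmod2 a : eqmod 2 [sg a] [sg j1].
Proof.
  apply eqmod2_j1. intros b c Hbc. apply (eqmod2_conj _ _ _ [rh b; rh c]).
  apply weq_rel. do 6 right. now exists b, c.
Qed.

Lemma rho_eqmod2 a : eqmod 2 [rh a] [rh j1].
Proof.
  apply eqmod2_j1. intros b c Hbc. apply eqmod2_braid.
  apply weq_rel. do 2 right; left. now exists b, c.
Qed.

Lemma sigma_inv_eqmod2 a : eqmod 2 [((true, a), true)] [((true, j1), true)].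
Proof. exact (winv_eqmod_proper _ 2 _ _ (sigma_eqmod2 a)). Qed.

Lemma rho_letter_eqmod2 a e : eqmod 2 [((false, a), e)] [rh j1].
Proof. rewrite <- (rho_eqmod2 a). destruct e; [now rewrite rho_inv | reflexivity]. Qed.

Definition abel_letter (l : VBgen n * bool) : Z_plus_Z2 :=
  match l with
  | ((true, _), false) => (1%Z, false)
  | ((true, _), true) => ((-1)%Z, false)
  | ((false, _), _) => (0%Z, true)
  end.

Definition abel : W -> Z_plus_Z2 := ev gmul gone abel_letter.

Lemma Z_plus_Z2_mul (p q : Z_plus_Z2) : gmul p q = ((fst p + fst q)%Z, xorb (snd p) (snd q)).
Proof. reflexivity. Qed.

Lemma Z_plus_Z2_mul_1r (p : Z_plus_Z2) : gmul p gone = p.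
Proof. destruct p as [z c]. simpl. f_equal; [lia | apply xorb_false_r]. Qed.

Lemma abel_app u v : abel (u ++ v) = gmul (abel u) (abel v).
Proof. apply ev_app; [exact (gmul_assoc Z_plus_Z2) | exact (gmul_1l Z_plus_Z2)]. Qed.

Lemma abel_cons l u : abel (l :: u) = gmul (abel_letter l) (abel u).
Proof. reflexivity. Qed.

Lemma abel_weq u v : u ≈ v -> abel u = abel v.
Proof.
  apply ev_weq;
    [exact (gmul_assoc Z_plus_Z2) | exact (gmul_1l Z_plus_Z2) | exact Z_plus_Z2_mul_1r | |].
  - intros [[|] a] [|]; reflexivity.
  - intros u' v' H.
    destruct H as [[a [b [N [-> ->]]]]|[[a [b [N [-> ->]]]]|[[a [b [N [-> ->]]]]|
      [[a [b [N [-> ->]]]]|[[a [-> ->]]|[[a [b [N [-> ->]]]]|[a [b [N [-> ->]]]]]]]]]];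
    reflexivity.
Qed.

Lemma Z_plus_Z2_inv_unique (p q : Z_plus_Z2) : gmul p q = gone -> p = ginv q.
Proof.
  destruct p as [z c], q as [z' c']. simpl. intros E. injection E as E1 E2.
  f_equal; [lia | now destruct c, c'].
Qed.

Lemma abel_winv u : abel (winv u) = ginv (abel u).
Proof.
  apply Z_plus_Z2_inv_unique. rewrite <- abel_app. exact (abel_weq _ _ (winv_l _ u)).
Qed.

Lemma abel_lcs2 u : lcs (@VBrel n) 2 u -> abel u = gone.
Proof.
  apply (@gen_ind _ _ _ (fun u => abel u = gone)).
  - intros w [x [y [_ ->]]]. rewrite comm_wcomm. unfold wcomm.
    rewrite !abel_app, !abel_winv. destruct (abel x), (abel y). simpl. f_equal; [lia | btauto].
  - reflexivity.
  - intros x y Hx Hy. now rewrite abel_app, Hx, Hy.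
  - intros x Hx. now rewrite abel_winv, Hx.
  - intros x y E. now rewrite (abel_weq _ _ E).
Qed.

Definition sigma_pow (z : Z) : W :=
  if Z.leb 0 z then repeat ((true, j1), false) (Z.to_nat z)
  else repeat ((true, j1), true) (Z.to_nat (- z)).

Definition rho_pow (c : bool) : W := if c then [rh j1] else [].

Definition abel_nf (p : Z_plus_Z2) : W := sigma_pow (fst p) ++ rho_pow (snd p).

Lemma abel_sigma_repeat e k :
  abel (repeat ((true, j1), e) k) = ((if e then - Z.of_nat k else Z.of_nat k)%Z, false).
Proof.
  induction k as [|k IH]; [now destruct e|].
  change (abel (repeat ((true, j1), e) (S k)))
    with (gmul (abel_letter ((true, j1), e)) (abel (repeat ((true, j1), e) k))).
  rewrite IH, Z_plus_Z2_mul. destruct e; cbn [fst snd abel_letter xorb]; f_equal; lia.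
Qed.

Lemma abel_abel_nf p : abel (abel_nf p) = p.
Proof.
  destruct p as [z c]. unfold abel_nf, sigma_pow. cbn [fst snd].
  rewrite abel_app, Z_plus_Z2_mul.
  replace (abel (rho_pow c)) with ((0%Z, c) : Z_plus_Z2) by now destruct c.
  destruct (Z.leb_spec 0 z); rewrite abel_sigma_repeat; cbn [fst snd xorb]; f_equal; lia.
Qed.

Lemma sigma_pow_succ z : sg j1 :: sigma_pow z ≈ sigma_pow (1 + z).
Proof.
  unfold sigma_pow. destruct (Z.leb_spec 0 z), (Z.leb_spec 0 (1 + z)); try lia.
  - now replace (Z.to_nat (1 + z)) with (S (Z.to_nat z)) by lia.
  - replace (Z.to_nat (- z)) with (S (Z.to_nat (- (1 + z)))) by lia.
    replace (Z.to_nat (1 + z)) with 0 by lia. replace (Z.to_nat (- (1 + z))) with 0 by lia.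
    exact (weq_free_at _ [] [] (true, j1) false).
  - replace (Z.to_nat (- z)) with (S (Z.to_nat (- (1 + z)))) by lia.
    exact (weq_free_at _ [] _ (true, j1) false).
Qed.

Lemma sigma_pow_pred z : ((true, j1), true) :: sigma_pow z ≈ sigma_pow (-1 + z).
Proof.
  unfold sigma_pow. destruct (Z.leb_spec 0 z), (Z.leb_spec 0 (-1 + z)); try lia.
  - replace (Z.to_nat z) with (S (Z.to_nat (-1 + z))) by lia.
    exact (weq_free_at _ [] _ (true, j1) true).
  - replace z with 0%Z by lia. reflexivity.
  - now replace (Z.to_nat (- (-1 + z))) with (S (Z.to_nat (- z))) by lia.
Qed.

Lemma eqmod2_abel_nf w : eqmod 2 w (abel_nf (abel w)).
Proof.
  induction w as [|l w IH]; [reflexivity|].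
  rewrite abel_cons, Z_plus_Z2_mul. change (l :: w) with ([l] ++ w).
  transitivity ([l] ++ abel_nf (abel w)); [now apply eqmod_app_l|].
  destruct (abel w) as [z c]. unfold abel_nf. cbn [fst snd].
  destruct l as [[[|] a] e].
  - destruct e; cbn [fst snd abel_letter xorb].
    + now rewrite (sigma_inv_eqmod2 a), <- sigma_pow_pred.
    + now rewrite (sigma_eqmod2 a), <- sigma_pow_succ.
  - cbn [fst snd abel_letter xorb]. rewrite (rho_letter_eqmod2 a e), app_assoc.
    rewrite (eqmod_commute _ 1 [rh j1]) by exact I. rewrite <- app_assoc.
    apply eqmod_app_l. destruct c; simpl; [now rewrite rho_sq | reflexivity].
Qed.

Lemma VB_abelianization : quot_iso (Gamma (VB n) 1) (Gamma (VB n) 2) Z_plus_Z2.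
Proof.
  exists abel. split; [|split; [|split]].
  - intros x y _ _ H. change (lcs (@VBrel n) 2 (winv x ++ y)) in H.
    apply abel_lcs2 in H. rewrite abel_app, abel_winv in H.
    simpl. destruct (abel x) as [z c], (abel y) as [z' c']. simpl in H.
    injection H as E1 E2. f_equal; [lia | now destruct c, c'].
  - intros x y _ _. apply abel_app.
  - intros x y _ _ H. change (eqmod 2 x y). now rewrite (eqmod2_abel_nf x), (eqmod2_abel_nf y), H.
  - intros p. exists (abel_nf p). split; [exact I | apply abel_abel_nf].
Qed.

End Abelianization.

Section SecondQuotient.
Variable n : nat.
Hypothesis Hn : 2 <= n.
Local Notation W := (word (VBgen n)).
Local Notation "u ≈ v" := (weq (@VBrel n) u v) (at level 70).
Local Notation eqmod := (eqmod (@VBrel n)).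
Local Notation lcs := (lcs (@VBrel n)).
Local Notation j1 := (j1 n Hn).

Definition sr_comm : W := wcomm [sg j1] [rh j1].
Definition sr_comm_pow (e : bool) : W := if e then sr_comm else [].

Lemma sr_comm_pow_lcs2 e : lcs 2 (sr_comm_pow e).
Proof. destruct e; [apply lcs_wcomm_l; exact I | apply lcs_nil]. Qed.

Lemma sr_comm_sq : eqmod 3 (sr_comm ++ sr_comm) [].
Proof.
  unfold sr_comm. rewrite <- wcomm_app_r_mod3.
  apply weq_eqmod. cbn [app]. rewrite rho_sq. apply wcomm_nil_r.
Qed.

Lemma winv_sr_comm : eqmod 3 (winv sr_comm) sr_comm.
Proof.
  rewrite <- (app_nil_r (winv sr_comm)), <- sr_comm_sq.
  apply weq_eqmod, cancel_winv_l.
Qed.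

Lemma sr_comm_pow_mul e1 e2 :
  eqmod 3 (sr_comm_pow e1 ++ sr_comm_pow e2) (sr_comm_pow (xorb e1 e2)).
Proof. destruct e1, e2; simpl; rewrite ?app_nil_r; [apply sr_comm_sq | reflexivity ..]. Qed.

Lemma winv_sr_comm_pow e : eqmod 3 (winv (sr_comm_pow e)) (sr_comm_pow e).
Proof. destruct e; [apply winv_sr_comm | reflexivity]. Qed.

Definition letter_nf (l : VBgen n * bool) : VBgen n * bool :=
  match l with ((true, _), e) => ((true, j1), e) | ((false, _), _) => rh j1 end.

Lemma letter_nf_eqmod2 l : eqmod 2 [l] [letter_nf l].
Proof.
  destruct l as [[[|] a] [|]];
    [apply sigma_inv_eqmod2 | apply sigma_eqmod2 | apply rho_letter_eqmod2 ..].
Qed.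

Lemma letter_nf_comm l m :
  exists e, eqmod 3 (wcomm [letter_nf l] [letter_nf m]) (sr_comm_pow e).
Proof.
  assert (Hrs : eqmod 3 (wcomm [rh j1] [sg j1]) sr_comm)
    by (rewrite <- winv_wcomm; apply winv_sr_comm).
  assert (Hs'r : eqmod 3 (wcomm (winv [sg j1]) [rh j1]) sr_comm)
    by (now rewrite wcomm_winv_l_mod3).
  assert (Hrs' : eqmod 3 (wcomm [rh j1] (winv [sg j1])) sr_comm)
    by (now rewrite <- winv_wcomm, Hs'r, winv_sr_comm).
  destruct l as [[[|] a] [|]], m as [[[|] b] [|]]; cbn [letter_nf];
    first [ exists false; apply weq_eqmod;
            first [ apply wcomm_same | apply (wcomm_winv_r _ [sg j1])
                  | apply (wcomm_winv_l _ [sg j1]) ]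
          | exists true; first [ reflexivity | assumption ] ].
Qed.

Lemma wcomm_letter_mod3 l m : exists e, eqmod 3 (wcomm [l] [m]) (sr_comm_pow e).
Proof.
  destruct (letter_nf_comm l m) as [e He]. exists e.
  now rewrite (wcomm_eqmod_l _ _ _ [m] (letter_nf_eqmod2 l)),
    (wcomm_eqmod_r _ [letter_nf l] _ _ (letter_nf_eqmod2 m)).
Qed.

Lemma wcomm_mod3 (x y : W) : exists e, eqmod 3 (wcomm x y) (sr_comm_pow e).
Proof.
  assert (Hl : forall l (y : W), exists e, eqmod 3 (wcomm [l] y) (sr_comm_pow e)).
  { intros l y'. induction y' as [|m y' [e IH]].
    - exists false. apply weq_eqmod, wcomm_nil_r.
    - destruct (wcomm_letter_mod3 l m) as [e' He']. exists (xorb e' e).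
      change (m :: y') with ([m] ++ y').
      now rewrite wcomm_app_r_mod3, He', IH, sr_comm_pow_mul. }
  revert y. induction x as [|l x IH]; intros y.
  - exists false. apply weq_eqmod, wcomm_nil_l.
  - destruct (Hl l y) as [e1 H1], (IH y) as [e2 H2]. exists (xorb e1 e2).
    change (l :: x) with ([l] ++ x).
    now rewrite wcomm_app_l_mod3, H1, H2, sr_comm_pow_mul.
Qed.

Lemma lcs2_sr_comm_pow u : lcs 2 u -> exists e, eqmod 3 u (sr_comm_pow e).
Proof.
  apply (@gen_ind _ _ _ (fun u => exists e, eqmod 3 u (sr_comm_pow e))).
  - intros w [x [y [_ ->]]]. rewrite comm_wcomm. apply wcomm_mod3.
  - exists false. reflexivity.
  - intros x y [e1 H1] [e2 H2]. exists (xorb e1 e2). now rewrite H1, H2, sr_comm_pow_mul.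
  - intros x [e H]. exists e. now rewrite H, winv_sr_comm_pow.
  - intros x y E [e H]. exists e. now rewrite <- E.
Qed.

End SecondQuotient.

Section LcsStable.
Variable n : nat.
Hypothesis Hn : 4 <= n.
Let Hn2 : 2 <= n. Proof. lia. Qed.
Local Notation eqmod := (eqmod (@VBrel n)).
Local Notation j1 := (j1 n Hn2).

Let i3 : idx n := mkidx n 3 (conj (le_S _ _ (le_S _ _ (le_n 1))) (ltac:(lia) : 3 < n)).

(* rho_1 = rho_3 modulo Gamma_2, and rho_3 commutes with sigma_1. *)
Lemma sr_comm_lcs3 : eqmod 3 (sr_comm n Hn2) [].
Proof.
  unfold sr_comm. rewrite (wcomm_eqmod_r _ [sg j1] _ [rh i3]) by (symmetry; apply rho_eqmod2).
  apply weq_eqmod, wcomm_of_commute, weq_rel. do 5 right; left.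
  exists j1, i3. unfold far. simpl. split; [lia | split; reflexivity].
Qed.

Lemma VB_lcs2_lcs3 (x : VB n) : Gamma (VB n) 2 x <-> Gamma (VB n) 3 x.
Proof.
  split; [|apply (lcs_S _ 2)].
  intros H. destruct (lcs2_sr_comm_pow n Hn2 x H) as [e He].
  apply (eqmod_lcs _ 3 [] x); [|apply lcs_nil].
  rewrite He. symmetry. destruct e; [apply sr_comm_lcs3 | reflexivity].
Qed.

End LcsStable.

(* (a, b, c) stands for s^a r^b z^c in < s, r, z | r^2 = z^2 = 1, z central,
   r s r^-1 = s z >: moving r^b1 to the right of s^a2 produces z^(b1 a2). *)
Definition heis := (Z * bool * bool)%type.

Definition heis_mul (p q : heis) : heis :=
  let '(a1, b1, c1) := p in let '(a2, b2, c2) := q in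
  ((a1 + a2)%Z, xorb b1 b2, xorb (xorb c1 c2) (b1 && Z.odd a2)).

Definition heis_one : heis := (0%Z, false, false).

Definition heis_inv (p : heis) : heis := let '(a, b, c) := p in ((- a)%Z, b, xorb c (b && Z.odd a)).

Lemma heis_mul_assoc p q r : heis_mul p (heis_mul q r) = heis_mul (heis_mul p q) r.
Proof.
  destruct p as [[a1 b1] c1], q as [[a2 b2] c2], r as [[a3 b3] c3]. simpl.
  rewrite Z.odd_add. f_equal; [f_equal; [lia | btauto] | btauto].
Qed.

Lemma heis_mul_1l p : heis_mul heis_one p = p.
Proof. destruct p as [[a b] c]. simpl. now destruct c. Qed.

Lemma heis_mul_1r p : heis_mul p heis_one = p.
Proof. destruct p as [[a b] c]. simpl. f_equal; [f_equal; [lia | btauto] | btauto]. Qed.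

Lemma heis_inv_unique p q : heis_mul p q = heis_one -> p = heis_inv q.
Proof.
  destruct p as [[a b] c], q as [[a' b'] c']. simpl. intros E. injection E as E1 E2 E3.
  assert (b = b') as <- by now destruct b, b'.
  f_equal; [f_equal; lia|]. destruct b, c, c', (Z.odd a'); simpl in *; congruence.
Qed.

Definition heis_letter (l : VBgen 3 * bool) : heis :=
  match l with
  | ((true, _), false) => (1%Z, false, false)
  | ((true, _), true) => ((-1)%Z, false, false)
  | ((false, _), _) => (0%Z, true, false)
  end.

Definition heis_ev : word (VBgen 3) -> heis := ev heis_mul heis_one heis_letter.

Lemma heis_ev_app u v : heis_ev (u ++ v) = heis_mul (heis_ev u) (heis_ev v).
Proof. apply ev_app; [apply heis_mul_assoc | apply heis_mul_1l]. Qed.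

(* On three strands no two indices are far apart, which excludes the only relations
   that fail in [heis]. *)
Lemma heis_ev_weq u v : weq (@VBrel 3) u v -> heis_ev u = heis_ev v.
Proof.
  apply ev_weq; [apply heis_mul_assoc | apply heis_mul_1l | apply heis_mul_1r | |].
  - intros [[|] a] [|]; reflexivity.
  - intros u' v' H.
    destruct H as [[a [b [N [-> ->]]]]|[[a [b [N [-> ->]]]]|[[a [b [N [-> ->]]]]|
      [[a [b [N [-> ->]]]]|[[a [-> ->]]|[[a [b [N [-> ->]]]]|[a [b [N [-> ->]]]]]]]]]];
      try reflexivity;
      exfalso; unfold far in N; destruct a as [i Hi], b as [j Hj]; simpl in N; lia.
Qed.

Lemma heis_ev_winv u : heis_ev (winv u) = heis_inv (heis_ev u).
Proof. apply heis_inv_unique. rewrite <- heis_ev_app. apply (heis_ev_weq _ _ (winv_l _ u)). Qed.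

Lemma heis_comm_in_z p q :
  exists c, heis_mul (heis_inv p) (heis_mul (heis_inv q) (heis_mul p q)) = (0%Z, false, c).
Proof.
  destruct p as [[a b] c], q as [[a' b'] c']. simpl. eexists. f_equal. f_equal; [lia | btauto].
Qed.

Lemma heis_z_central c q :
  heis_mul (heis_inv (0%Z, false, c)) (heis_mul (heis_inv q) (heis_mul (0%Z, false, c) q))
  = heis_one.
Proof.
  destruct q as [[a b] c']. simpl.
  unfold heis_one. f_equal; [f_equal; [lia | btauto] | btauto].
Qed.

Lemma heis_ev_lcs2 u : lcs (@VBrel 3) 2 u -> exists c, heis_ev u = (0%Z, false, c).
Proof.
  apply (@gen_ind _ _ _ (fun u => exists c, heis_ev u = (0%Z, false, c))).
  - intros w [x [y [_ ->]]]. rewrite comm_wcomm. unfold wcomm.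
    rewrite !heis_ev_app, !heis_ev_winv. apply heis_comm_in_z.
  - now exists false.
  - intros x y [c1 H1] [c2 H2]. exists (xorb c1 c2). rewrite heis_ev_app, H1, H2. simpl.
    now rewrite xorb_false_r.
  - intros x [c H]. exists c. rewrite heis_ev_winv, H. simpl. now rewrite xorb_false_r.
  - intros x y E [c H]. exists c. now rewrite <- (heis_ev_weq _ _ E).
Qed.

Lemma heis_ev_lcs3 u : lcs (@VBrel 3) 3 u -> heis_ev u = heis_one.
Proof.
  apply (@gen_ind _ _ _ (fun u => heis_ev u = heis_one)).
  - intros w [x [y [Hx ->]]]. rewrite comm_wcomm. unfold wcomm.
    rewrite !heis_ev_app, !heis_ev_winv.
    destruct (heis_ev_lcs2 x Hx) as [c ->]. apply heis_z_central.
  - reflexivity.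
  - intros x y H1 H2. now rewrite heis_ev_app, H1, H2.
  - intros x H. now rewrite heis_ev_winv, H.
  - intros x y E H. now rewrite <- (heis_ev_weq _ _ E).
Qed.

Definition zcoord (w : word (VBgen 3)) : Z2 := snd (heis_ev w).

Lemma zcoord_eqmod3 x y : lcs (@VBrel 3) 2 x -> lcs (@VBrel 3) 2 y ->
  eqmod (@VBrel 3) 3 x y -> zcoord x = zcoord y.
Proof.
  intros Hx Hy H. apply heis_ev_lcs3 in H. rewrite heis_ev_app, heis_ev_winv in H.
  destruct (heis_ev_lcs2 x Hx) as [c1 E1], (heis_ev_lcs2 y Hy) as [c2 E2].
  unfold zcoord. rewrite E1, E2 in *. simpl in H. injection H as H.
  now destruct c1, c2.
Qed.

Lemma VB3_lcs_quotient : quot_iso (Gamma (VB 3) 2) (Gamma (VB 3) 3) Z2.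
Proof.
  assert (H23 : 2 <= 3) by lia.
  assert (Hpow : forall e, zcoord (sr_comm_pow 3 H23 e) = e) by (intros [|]; reflexivity).
  exists zcoord. split; [|split; [|split]].
  - intros x y Hx Hy H. now apply zcoord_eqmod3.
  - intros x y Hx Hy. unfold zcoord. change (gmul x y) with (x ++ y). rewrite heis_ev_app.
    destruct (heis_ev_lcs2 x Hx) as [c1 ->], (heis_ev_lcs2 y Hy) as [c2 ->]. simpl. btauto.
  - intros x y Hx Hy H. change (eqmod (@VBrel 3) 3 x y).
    destruct (lcs2_sr_comm_pow 3 H23 x Hx) as [e1 E1], (lcs2_sr_comm_pow 3 H23 y Hy) as [e2 E2].
    rewrite E1, E2.
    rewrite (zcoord_eqmod3 _ _ Hx (sr_comm_pow_lcs2 _ _ e1) E1), Hpow,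
      (zcoord_eqmod3 _ _ Hy (sr_comm_pow_lcs2 _ _ e2) E2), Hpow in H.
    now rewrite H.
  - intros e. exists (sr_comm_pow 3 H23 e). split; [apply sr_comm_pow_lcs2 | apply Hpow].
Qed.

(** * VB_2 *)

Definition k1 : idx 2 := mkidx 2 1 (conj (le_n 1) (le_n 2)).

Lemma idx2_k1 (i : idx 2) : i = k1.
Proof. apply idx_eq. destruct i as [i Hi]. simpl. lia. Qed.

Definition VB2_to_ZZ2 : word (VBgen 2) -> word bool := wmap fst.
Definition ZZ2_to_VB2 : word bool -> word (VBgen 2) := wmap (fun t => (t, k1)).

Lemma VB2_to_ZZ2_weq u v : weq (@VBrel 2) u v -> weq ZZ2rel (VB2_to_ZZ2 u) (VB2_to_ZZ2 v).
Proof.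
  intros H. induction H as [| | |u u' v v' _ Hu _ Hv| |u v H].
  - reflexivity.
  - now symmetry.
  - etransitivity; eauto.
  - unfold VB2_to_ZZ2. rewrite !wmap_app. now apply weq_cat.
  - apply weq_free.
  - destruct H as [[a [b [N [-> ->]]]]|[[a [b [N [-> ->]]]]|[[a [b [N [-> ->]]]]|
      [[a [b [N [-> ->]]]]|[[a [-> ->]]|[[a [b [N [-> ->]]]]|[a [b [N [-> ->]]]]]]]]]];
      try (exfalso; unfold far, next in N; destruct a as [i Hi], b as [j Hj]; simpl in N; lia).
    now apply weq_rel.
Qed.

Lemma ZZ2_to_VB2_weq u v : weq ZZ2rel u v -> weq (@VBrel 2) (ZZ2_to_VB2 u) (ZZ2_to_VB2 v).
Proof.
  intros H. induction H as [| | |u u' v v' _ Hu _ Hv| |u v [-> ->]].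
  - reflexivity.
  - now symmetry.
  - etransitivity; eauto.
  - unfold ZZ2_to_VB2. rewrite !wmap_app. now apply weq_cat.
  - apply weq_free.
  - apply rho_sq.
Qed.

Lemma ZZ2_to_VB2_to_ZZ2 x : ZZ2_to_VB2 (VB2_to_ZZ2 x) = x.
Proof.
  induction x as [|[[t i] e] x IH]; [reflexivity|].
  cbn. f_equal; [now rewrite (idx2_k1 i) | exact IH].
Qed.

Lemma VB2_to_ZZ2_to_VB2 y : VB2_to_ZZ2 (ZZ2_to_VB2 y) = y.
Proof.
  induction y as [|[t e] y IH]; [reflexivity|]. cbn. now f_equal.
Qed.

Lemma VB2_iso_ZZ2 : isomorphic (VB 2) Z_free_Z2.
Proof.
  exists VB2_to_ZZ2, ZZ2_to_VB2. split; [|split; [|split]].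
  - split; [apply VB2_to_ZZ2_weq|]. intros x y.
    change (weq ZZ2rel (wmap fst (x ++ y)) (wmap fst x ++ wmap fst y)). now rewrite wmap_app.
  - split; [apply ZZ2_to_VB2_weq|]. intros x y.
    change (weq (@VBrel 2) (ZZ2_to_VB2 (x ++ y)) (ZZ2_to_VB2 x ++ ZZ2_to_VB2 y)).
    unfold ZZ2_to_VB2. now rewrite wmap_app.
  - intros x. simpl. rewrite ZZ2_to_VB2_to_ZZ2. reflexivity.
  - intros y. simpl. rewrite VB2_to_ZZ2_to_VB2. reflexivity.
Qed.

Lemma VB2_resid_nilp : resid_nilp (VB 2).
Proof.
  intros x H. change (weq (@VBrel 2) x []).
  rewrite <- (ZZ2_to_VB2_to_ZZ2 x). apply (ZZ2_to_VB2_weq _ []).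
  apply Z_free_Z2_resid_nilp. intros i Hi.
  apply (lcs_wmap _ _ fst VB2_to_ZZ2_weq), H, Hi.
Qed.

Theorem proposition4p4 :
  (* (a) *)
  (isomorphic (VB 2) Z_free_Z2 /\ resid_nilp Z_free_Z2 /\ resid_nilp (VB 2)) /\
  (* (b) *)
  (forall n, 2 <= n ->
     quot_iso (Gamma (VB n) 1) (Gamma (VB n) 2) Z_plus_Z2) /\
  (* (c) *)
  (quot_iso (Gamma (VB 3) 2) (Gamma (VB 3) 3) Z2 /\
   forall n, 4 <= n -> forall x : VB n, Gamma (VB n) 2 x <-> Gamma (VB n) 3 x) /\
  (* (d) *)
  (forall n, 3 <= n -> ~ resid_nilp (VB n)).
Proof.
  split; [exact (conj VB2_iso_ZZ2 (conj Z_free_Z2_resid_nilp VB2_resid_nilp))|].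
  split; [exact VB_abelianization|].
  split; [exact (conj VB3_lcs_quotient VB_lcs2_lcs3)|].
  exact VB_not_resid_nilp.
Qed.
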